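(* Let $\|\cdot\|$ be any submultiplicative matrix norm, $L>0$ (with $L\ge1$), $\alpha\in(0,1)$, $\Delta:=(\alpha^{1/2}-\alpha)/L$, and integers $t'<t''$. Suppose square matrices $\{\Phi_t\}_{t=t'+1}^{t''}$ and $\{\Phi'_t\}_{t=t'+1}^{t''}$ satisfy $\|\Phi_{s_2}\Phi_{s_2-1}\cdots\Phi_{s_1}\|\le L\alpha^{s_2-s_1+1}$ for all $t'+1\le s_1\le s_2\le t''$ and $\|\Phi_t-\Phi'_t\|\le\Delta$ for all $t\in\{t'+1,\dots,t''\}$. Then $\|\Phi'_{t''}\Phi'_{t''-1}\cdots\Phi'_{t'+1}\|\le L\alpha^{(t''-t')/2}$.
   Context: Products are ordered with larger indices on the left. The hypothesis on consecutive products of $\Phi_t$ is the bound used for every sub-block of consecutive factors (the paper states it as $\|\prod_{t=t'+1}^{t''}\Phi_t\|\le L\alpha^{t''-t'}$ applied to all consecutive subranges). *)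

From HB Require Import structures.
From mathcomp Require Import all_boot all_order all_algebra.
Set Implicit Arguments. Unset Strict Implicit. Unset Printing Implicit Defensive.
Import Order.TTheory GRing.Theory Num.Theory.
Local Open Scope ring_scope.

Definition submult_mx_norm (R : numDomainType) (n : nat) (N : 'M[R]_n -> R) : Prop :=
  [/\ forall A, 0 <= N A,
      forall A, N A = 0 -> A = 0,
      forall A B, N (A + B) <= N A + N B,
      forall (a : R) A, N (a *: A) = `|a| * N A
    & forall A B, N (A *m B) <= N A * N B].

(* Ordered product with larger indices on the left:
   mxprod Phi a k = Phi (a+k-1) *m ... *m Phi (a+1) *m Phi a  (k factors). *)
Fixpoint mxprod (R : pzRingType) (n : nat) (Phi : int -> 'M[R]_n) (a : int) (k : nat)
  : 'M[R]_n :=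
  match k with
  | 0 => 1%:M
  | k'.+1 => Phi (a + k'%:Z) *m mxprod Phi a k'
  end.

(* Writing the mixed
   product of k unperturbed factors on the left and j perturbed ones on the right,
   substitute Phi' = Phi - (Phi - Phi') in the top perturbed factor: this gives a
   mixed product with k+1 unperturbed and j-1 perturbed factors, plus an error
   term of norm at most L alpha^k * D * L s^(j-1).  By induction on j the mixed
   product is bounded by L alpha^k s^j as soon as alpha + L D <= s, and
   s = sqrt alpha, D = (s - alpha)/L makes this an equality. *)

From HB Require Import structures.
From mathcomp Require Import all_boot all_order all_algebra.
From mathcomp Require Import zify ring.
Set Implicit Arguments. Unset Strict Implicit. Unset Printing Implicit Defensive.
Import Order.TTheory GRing.Theory Num.Theory.
Local Open Scope ring_scope.

Lemma mxprodSr (R : pzRingType) (n : nat) (P : int -> 'M[R]_n) (b : int) (k : nat) :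
  mxprod P b k.+1 = mxprod P (b + 1) k *m P b.
Proof.
elim: k => [|k IH] /=; first by rewrite addr0 mulmx1 mul1mx.
rewrite /= in IH; rewrite IH mulmxA.
by have -> : b + (k.+1)%:Z = b + 1 + k%:Z by lia.
Qed.

Section PerturbedProduct.

Variables (R : numDomainType) (n : nat) (N : 'M[R]_n -> R).
Hypothesis N_submult : submult_mx_norm N.

Variables (Phi Phi' : int -> 'M[R]_n) (a : int) (M : nat) (L alpha s D : R).
Hypothesis L_ge1 : 1 <= L.
Hypothesis alpha_ge0 : 0 <= alpha.
Hypothesis rate_ge : alpha + L * D <= s.
Hypothesis Phi_prod_bound : forall j k, (0 < k)%N -> (k + j <= M)%N ->
  N (mxprod Phi (a + j%:Z) k) <= L * alpha ^+ k.
Hypothesis Phi_perturb : forall j, (j < M)%N ->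
  N (Phi (a + j%:Z) - Phi' (a + j%:Z)) <= D.

Let L_ge0 : 0 <= L := le_trans ler01 L_ge1.

Lemma mxnormB (A B : 'M[R]_n) : N (A - B) <= N A + N B.
Proof.
case: N_submult => _ _ Ntri Nsc _.
by rewrite -scaleN1r; apply: le_trans (Ntri _ _) _; rewrite Nsc normrN normr1 mul1r.
Qed.

Lemma Phi_prod_mul_le j k X : (k + j <= M)%N ->
  N (mxprod Phi (a + j%:Z) k *m X) <= L * alpha ^+ k * N X.
Proof.
case: N_submult => N0 _ _ _ Nmul; case: k => [|k] kjM.
  by rewrite mul1mx expr0 mulr1 ler_peMl.
by apply: le_trans (Nmul _ _) _; apply: ler_wpM2r => //; apply: Phi_prod_bound.
Qed.

Lemma mxnorm_mixed_prod_le j k : (k + j <= M)%N -> (0 < k + j)%N ->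
  N (mxprod Phi (a + j%:Z) k *m mxprod Phi' a j) <= L * alpha ^+ k * s ^+ j.
Proof.
case: N_submult => N0 _ _ _ Nmul.
elim: j k => [|j IH] k kjM kj0.
  by rewrite /= mulmx1 expr0 mulr1; apply: (Phi_prod_bound (j := 0%N)); rewrite addn0 in kj0.
set B := mxprod Phi (a + j.+1%:Z) k; set P := mxprod Phi' a j.
set E := Phi (a + j%:Z) - Phi' (a + j%:Z).
have jM : (j < M)%N by lia.
have D_ge0 : 0 <= D := le_trans (N0 E) (Phi_perturb jM).
have s_ge0 : 0 <= s := le_trans (addr_ge0 alpha_ge0 (mulr_ge0 L_ge0 D_ge0)) rate_ge.
have P_le : forall Y, N (Y *m P) <= N Y * (L * s ^+ j).
  move=> Y; case: (posnP j) => [j0|j_gt0].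
    by rewrite /P j0 /= mulmx1 expr0 mulr1 ler_peMr.
  apply: le_trans (Nmul _ _) _; apply: ler_wpM2l => //.
  by have := IH 0%N ltac:(lia) ltac:(lia); rewrite /= mul1mx expr0 mulr1.
have split_last : B *m mxprod Phi' a j.+1 = mxprod Phi (a + j%:Z) k.+1 *m P - B *m (E *m P).
  rewrite [mxprod Phi' a j.+1]/= mxprodSr (_ : a + j%:Z + 1 = a + j.+1%:Z); last by lia.
  by rewrite -/B -mulmxA -mulmxBr -mulmxBl /E opprB addrCA subrr addr0.
have err_le : N (B *m (E *m P)) <= L * alpha ^+ k * (D * (L * s ^+ j)).
  apply: le_trans (Phi_prod_mul_le _ kjM) _.
  apply: ler_wpM2l; first by rewrite mulr_ge0 ?exprn_ge0.
  apply: le_trans (P_le _) _; apply: ler_wpM2r; first by rewrite mulr_ge0 ?exprn_ge0.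
  exact: Phi_perturb.
rewrite split_last; apply: le_trans (mxnormB _ _) _.
apply: le_trans (lerD (IH k.+1 ltac:(lia) ltac:(lia)) err_le) _.
have -> : L * alpha ^+ k.+1 * s ^+ j + L * alpha ^+ k * (D * (L * s ^+ j))
          = L * alpha ^+ k * s ^+ j * (alpha + L * D) by rewrite exprS; ring.
by rewrite [s ^+ j.+1]exprSr mulrA ler_wpM2l // !mulr_ge0 ?exprn_ge0.
Qed.

Lemma perturbed_prod_le : (0 < M)%N -> N (mxprod Phi' a M) <= L * s ^+ M.
Proof.
move=> M0; have := @mxnorm_mixed_prod_le M 0%N (leqnn M) M0.
by rewrite mul1mx expr0 mulr1.
Qed.

End PerturbedProduct.

Theorem lemmaB1 (R : rcfType) (n : nat) (N : 'M[R]_n -> R)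
  (L alpha : R) (t1 t2 : int) (Phi Phi' : int -> 'M[R]_n) :
  submult_mx_norm N ->
  0 < L -> 1 <= L ->
  0 < alpha -> alpha < 1 ->
  (t1 < t2)%R ->
  (forall s1 s2 : int, (t1 + 1 <= s1)%R -> (s1 <= s2)%R -> (s2 <= t2)%R ->
     N (mxprod Phi s1 (absz (s2 - s1 + 1))) <= L * alpha ^+ (absz (s2 - s1 + 1))) ->
  (forall t : int, (t1 + 1 <= t)%R -> (t <= t2)%R ->
     N (Phi t - Phi' t) <= (Num.sqrt alpha - alpha) / L) ->
  N (mxprod Phi' (t1 + 1) (absz (t2 - t1)%R)) <= L * Num.sqrt alpha ^+ (absz (t2 - t1)%R).
Proof.
move=> normN L_gt0 L_ge1 alpha_gt0 _ t12 Phi_bound Phi_close.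
have M_gt0 : (0 < absz (t2 - t1))%N by lia.
apply: (perturbed_prod_le normN (D := (Num.sqrt alpha - alpha) / L) L_ge1
  (ltW alpha_gt0) _ _ _ M_gt0).
- by rewrite mulrC mulfVK ?gt_eqF // addrC subrK.
- move=> j k k_gt0 kjM; have := Phi_bound (t1 + 1 + j%:Z) (t1 + 1 + j%:Z + k%:Z - 1).
  rewrite (_ : _ - _ + 1 = k%:Z) ?absz_nat; last by ring.
  by apply; lia.
- by move=> j jM; apply: Phi_close; lia.
Qed.
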